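(* Consider the system \[ \begin{aligned} \dot S_1 &= (S^{(0)}-S_1)D - y_1\mu_1(S_1)X_1,\\ \dot X_1 &= -D_1X_1 + \mu_1(S_1)X_1,\\ \dot S_2 &= -DS_2 + y_2\mu_1(S_1)X_1 - y_3\mu_2(S_2,S_3)X_2,\\ \dot S_3 &= -DS_3 + y_4\mu_1(S_1)X_1,\\ \dot X_2 &= -D_2X_2 + \mu_2(S_2,S_3)X_2, \end{aligned} \] on the nonnegative orthant of $(S_1,X_1,S_2,S_3,X_2)$-space, under the standing assumptions described in the context. If $\lambda_1\ge S^{(0)}$, then $E=(S^{(0)},0,0,0,0)$ is a globally asymptotically stable equilibrium of this system.
   Context: Parameters: $D>0$, $S^{(0)}>0$, $D_i=D+k_i$ with $k_i\ge 0$ ($i=1,2$), and $y_1,y_2,y_3,y_4>0$. The functions $\mu_1,\mu_2$ satisfy: (H1) $\mu_1\in C^1(\mathbb{R}_+)$ and $\mu_1'(S_1)>0$ for all $S_1>0$; (H2) $\mu_1(0)=0$ and $\mu_1(S_1)>0$ for $S_1>0$; (H3) $\mu_2\in C^1(\mathbb{R}^2_+)$ and $\mu_2(S_2,S_3)>0$ if $S_2>0,S_3>0$; (H4) $\lim_{S_3\to\infty}\mu_2(S_2,S_3)=0$ for all $S_2\ge0$; (H5) $\lim_{S_2\to\infty}\mu_2(S_2,S_3)=0$ for all $S_3\ge0$; (H6) $\mu_2(0,S_3)=0$ for all $S_3\ge0$ and $\mu_2(S_2,0)\ge0$ for $S_2>0$; (H7) there is a continuous $\Gamma:\mathbb{R}_+\to\mathbb{R}$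 with $\partial_{S_2}\mu_2(S_2,S_3)>0$ for $S_2<\Gamma(S_3)$ and $<0$ for $S_2>\Gamma(S_3)$. The break-even concentration $\lambda_1$ is the unique positive extended real number with $\mu_1(\lambda_1)=D_1$; if no such number exists, $\lambda_1=+\infty$. *)

From Stdlib Require Import Reals.
From Coquelicot Require Import Coquelicot.
Open Scope R_scope.

Definition cont_on_nonneg (f : R -> R) : Prop :=
  forall a, 0 <= a -> forall eps, 0 < eps -> exists del, 0 < del /\
    forall u, 0 <= u -> Rabs (u - a) < del -> Rabs (f u - f a) < eps.

Definition cont_on_quadrant (g : R -> R -> R) : Prop :=
  forall a b, 0 <= a -> 0 <= b -> forall eps, 0 < eps -> exists del, 0 < del /\
    forall u v, 0 <= u -> 0 <= v -> Rabs (u - a) < del -> Rabs (v - b) < del ->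
      Rabs (g u v - g a b) < eps.

(** f is C^1 on R_+ with derivative f' : f is continuous on [0,oo),
    differentiable on (0,oo) with derivative f', and f' extends
    continuously to [0,oo) (so f'(0) is the one-sided derivative). *)
Definition C1_nonneg_with (f f' : R -> R) : Prop :=
  cont_on_nonneg f /\ cont_on_nonneg f' /\
  (forall x, 0 < x -> is_derive f x (f' x)).

(** g is C^1 on R_+^2 with partial derivatives d2 (w.r.t. first argument)
    and d3 (w.r.t. second argument): g continuous on the closed quadrant,
    (Frechet) differentiable in the open quadrant with gradient (d2,d3),
    and d2, d3 extend continuously to the closed quadrant. *)
Definition C1_quadrant_with (g d2 d3 : R -> R -> R) : Prop :=
  cont_on_quadrant g /\ cont_on_quadrant d2 /\ cont_on_quadrant d3 /\
  (forall a b, 0 < a -> 0 < b -> differentiable_pt_lim g a b (d2 a b) (d3 a b)).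

Definition is_break_even (mu1 : R -> R) (D1 : R) (l : Rbar) : Prop :=
  (exists x, 0 < x /\ l = Finite x /\ mu1 x = D1) \/
  (l = p_infty /\ ~ (exists x, 0 < x /\ mu1 x = D1)).

Record state := mkState { St1 : R; Xt1 : R; St2 : R; St3 : R; Xt2 : R }.

Definition in_orthant (p : state) : Prop :=
  0 <= St1 p /\ 0 <= Xt1 p /\ 0 <= St2 p /\ 0 <= St3 p /\ 0 <= Xt2 p.

Definition dist5 (p q : state) : R :=
  sqrt ((St1 p - St1 q)^2 + (Xt1 p - Xt1 q)^2 + (St2 p - St2 q)^2
        + (St3 p - St3 q)^2 + (Xt2 p - Xt2 q)^2).

Definition field (D S0 D1 D2 y1 y2 y3 y4 : R) (mu1 : R -> R) (mu2 : R -> R -> R)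
  (p : state) : state :=
  let s1 := St1 p in let x1 := Xt1 p in let s2 := St2 p in
  let s3 := St3 p in let x2 := Xt2 p in
  mkState ((S0 - s1) * D - y1 * mu1 s1 * x1)
          (- D1 * x1 + mu1 s1 * x1)
          (- D * s2 + y2 * mu1 s1 * x1 - y3 * mu2 s2 s3 * x2)
          (- D * s3 + y4 * mu1 s1 * x1)
          (- D2 * x2 + mu2 s2 s3 * x2).

Definition is_solution (F : state -> state) (z : R -> state) : Prop :=
  (forall t, 0 <= t -> in_orthant (z t)) /\
  filterlim (fun t => St1 (z t)) (at_right 0) (locally (St1 (z 0))) /\
  filterlim (fun t => Xt1 (z t)) (at_right 0) (locally (Xt1 (z 0))) /\
  filterlim (fun t => St2 (z t)) (at_right 0) (locally (St2 (z 0))) /\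
  filterlim (fun t => St3 (z t)) (at_right 0) (locally (St3 (z 0))) /\
  filterlim (fun t => Xt2 (z t)) (at_right 0) (locally (Xt2 (z 0))) /\
  (forall t, 0 < t ->
     is_derive (fun s => St1 (z s)) t (St1 (F (z t))) /\
     is_derive (fun s => Xt1 (z s)) t (Xt1 (F (z t))) /\
     is_derive (fun s => St2 (z s)) t (St2 (F (z t))) /\
     is_derive (fun s => St3 (z s)) t (St3 (F (z t))) /\
     is_derive (fun s => Xt2 (z s)) t (Xt2 (F (z t)))).

Definition globally_asymptotically_stable (F : state -> state) (E : state) : Prop :=
  in_orthant E /\ F E = mkState 0 0 0 0 0 /\
  (forall eps, 0 < eps -> exists del, 0 < del /\
     forall z, is_solution F z -> dist5 (z 0) E < del ->
       forall t, 0 <= t -> dist5 (z t) E < eps) /\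
  (forall z, is_solution F z -> is_lim (fun t => dist5 (z t) E) p_infty 0).

(* With Z = S1 + y1 X1 - S0 one has Z' = - D Z - y1 k1 X1 <= - D Z, hence
   S1 <= S0 + c exp (- D t) with c = max 0 (Z 0).  The hypothesis lambda1 >= S0 means
   mu1 S0 <= D1, and mu1 is Lipschitz just above S0, so the per-capita growth rate
   mu1 S1 - D1 of X1 is at most L c exp (- D t); by Gronwall X1 <= X1(0) exp (L c / D),
   which gives stability.  For attractivity: once c exp (- D t) is small, X1 >= eps would
   force S1 <= S0 - y1 eps / 2, where mu1 < D1, so X1 -> 0.  Then S0 - S1, S2 and S3 obey
   u' <= - D u + y mu1(S1) X1 and vanish with their input, and once S2, S3 are small,
   mu2 <= D2 / 2 makes X2 decay exponentially. *)

From Stdlib Require Import Reals Lra.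
From Coquelicot Require Import Coquelicot.
Open Scope R_scope.

Definition right_continuous (f : R -> R) (T : R) : Prop :=
  filterlim f (at_right T) (locally (f T)).

Lemma right_continuous_of_derive (f : R -> R) (T l : R) :
  is_derive f T l -> right_continuous f T.
Proof.
  intros Hf. eapply filterlim_filter_le_1; [apply filter_le_within|].
  apply (ex_derive_continuous (K := R_AbsRing) (V := R_NormedModule)). now exists l.
Qed.

Lemma right_continuous_plus (f g : R -> R) (T : R) :
  right_continuous f T -> right_continuous g T -> right_continuous (fun t => f t + g t) T.
Proof.
  intros Hf Hg. exact (filterlim_comp_2 f g Rplus Hf Hg (filterlim_plus (V := R_NormedModule) _ _)).
Qed.

Lemma right_continuous_mult (f g : R -> R) (T : R) :
  right_continuous f T -> right_continuous g T -> right_continuous (fun t => f t * g t) T.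
Proof.
  intros Hf Hg. exact (filterlim_comp_2 f g Rmult Hf Hg (filterlim_mult (K := R_AbsRing) _ _)).
Qed.

Lemma right_continuous_affine (f g h : R -> R) (a b c T : R) :
  (forall s, h s = a * f s + b * g s + c) ->
  right_continuous f T -> right_continuous g T -> right_continuous h T.
Proof.
  intros Hh Hf Hg.
  assert (Hc : forall r, right_continuous (fun _ => r) T) by (intros r; apply filterlim_const).
  assert (Haff : right_continuous (fun s => a * f s + b * g s + c) T)
    by (apply right_continuous_plus; [apply right_continuous_plus | apply Hc];
        apply right_continuous_mult; auto).
  unfold right_continuous in *. rewrite Hh.
  apply (filterlim_ext (fun s => a * f s + b * g s + c)); [intros s; now rewrite Hh | exact Haff].
Qed.

Lemma is_derive_affine (f g h : R -> R) (a b c t df dg v : R) :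
  (forall s, h s = a * f s + b * g s + c) -> v = a * df + b * dg ->
  is_derive f t df -> is_derive g t dg -> is_derive h t v.
Proof.
  intros Hh -> Hf Hg.
  apply (is_derive_ext (fun s => a * f s + b * g s + c)); [intros s; now rewrite Hh|].
  assert (H := is_derive_plus _ _ t _ _
    (is_derive_plus _ _ t _ _ (is_derive_scal f t a df Hf) (is_derive_scal g t b dg Hg))
    (is_derive_const (K := R_AbsRing) c t)).
  revert H. unfold plus, scal, zero; simpl. now rewrite Rplus_0_r.
Qed.

Lemma exp_le (a b : R) : a <= b -> exp a <= exp b.
Proof. intros [Hlt | ->]; [left; now apply exp_increasing | lra]. Qed.

Lemma nonincreasing_of_derive_nonpos (h h' : R -> R) (T : R) :
  (forall t, T < t -> is_derive h t (h' t)) -> (forall t, T < t -> h' t <= 0) ->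
  right_continuous h T -> forall t, T <= t -> h t <= h T.
Proof.
  intros Hd Hneg Hrc t Ht.
  assert (Hmono : forall s, T < s <= t -> h t <= h s).
  { intros s [Hs Hst]. destruct (Req_dec s t) as [->|Hne]; [lra|].
    destruct (MVT_cor2 h h' s t) as [c [Hc Hcst]]; [lra| |].
    - intros c Hc. apply is_derive_Reals, Hd. lra.
    - assert (h' c <= 0) by (apply Hneg; lra). nra. }
  destruct (Req_dec t T) as [->|Hne]; [lra|].
  apply Rnot_lt_le; intros Hlt.
  destruct (proj1 (filterlim_locally _ _) Hrc (mkposreal _ (proj2 (Rlt_0_minus _ _) Hlt)))
    as [del Hdel].
  set (s := T + Rmin (del / 2) ((t - T) / 2)).
  assert (Hs : T < s <= t /\ s - T < del).
  { assert (0 < Rmin (del / 2) ((t - T) / 2)) by (apply Rmin_pos; pose proof (cond_pos del); lra).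
    pose proof (Rmin_l (del / 2) ((t - T) / 2)). pose proof (Rmin_r (del / 2) ((t - T) / 2)).
    unfold s; lra. }
  assert (Hball : Rabs (h s - h T) < h t - h T).
  { apply (Hdel s); [|lra]. change (Rabs (s - T) < del). rewrite Rabs_right; lra. }
  specialize (Hmono s (proj1 Hs)). apply Rabs_def2 in Hball. lra.
Qed.

Lemma integrating_factor_le (g g' phi phi' : R -> R) (T : R) :
  (forall t, T < t -> is_derive g t (g' t)) -> (forall t, is_derive phi t (phi' t)) ->
  (forall t, T < t -> phi' t * g t + g' t <= 0) -> right_continuous g T ->
  forall t, T <= t -> exp (phi t) * g t <= exp (phi T) * g T.
Proof.
  intros Hg Hphi Hneg Hrc.
  assert (Hexp : forall t, is_derive (fun s => exp (phi s)) t (phi' t * exp (phi t)))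
    by (intros t; apply (is_derive_comp exp phi), Hphi; apply is_derive_exp).
  apply (nonincreasing_of_derive_nonpos (fun t => exp (phi t) * g t)
    (fun t => exp (phi t) * (phi' t * g t + g' t))).
  - intros t Ht. assert (H := is_derive_mult _ _ t _ _ (Hexp t) (Hg t Ht) Rmult_comm).
    revert H. unfold plus, mult; simpl.
    now replace (phi' t * exp (phi t) * g t + exp (phi t) * g' t)
      with (exp (phi t) * (phi' t * g t + g' t)) by ring.
  - intros t Ht. pose proof (exp_pos (phi t)). pose proof (Hneg t Ht). nra.
  - apply right_continuous_mult; [eapply right_continuous_of_derive, Hexp | exact Hrc].
Qed.

Lemma linear_comparison (f f' : R -> R) (k G T : R) : 0 < k ->
  (forall t, T < t -> is_derive f t (f' t)) -> (forall t, T < t -> f' t <= - k * f t + G) ->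
  right_continuous f T ->
  forall t, T <= t -> f t <= G / k + (f T - G / k) * exp (- k * (t - T)).
Proof.
  intros Hk Hd Hle Hrc t Ht.
  assert (H : exp (k * (t - T)) * (f t - G / k) <= exp (k * (T - T)) * (f T - G / k)).
  { apply (integrating_factor_le (fun s => f s - G / k) f' (fun s => k * (s - T)) (fun _ => k));
      [| | | | exact Ht].
    - intros s Hs. apply (is_derive_affine f f _ 1 0 (- (G / k)) s (f' s) (f' s)); auto;
        [intros; ring | ring].
    - intros s. auto_derive; [auto | ring].
    - intros s Hs. specialize (Hle s Hs).
      replace (k * (f s - G / k)) with (k * f s - G) by (field; lra). lra.
    - apply (right_continuous_affine f f _ 1 0 (- (G / k))); auto. intros; ring. }
  replace (k * (T - T)) with 0 in H by ring. rewrite exp_0, Rmult_1_l in H.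
  assert (Hinv : exp (- k * (t - T)) * exp (k * (t - T)) = 1)
    by (rewrite <- exp_plus, <- exp_0; f_equal; ring).
  pose proof (exp_pos (- k * (t - T))).
  apply (Rmult_le_compat_l (exp (- k * (t - T)))) in H; [|lra].
  rewrite <- Rmult_assoc, Hinv in H. lra.
Qed.

Lemma linear_comparison_bound (f f' : R -> R) (k G : R) : 0 < k -> 0 <= G ->
  (forall t, 0 < t -> is_derive f t (f' t)) -> (forall t, 0 < t -> f' t <= - k * f t + G) ->
  right_continuous f 0 ->
  forall t, 0 <= t -> f t <= G / k + Rmax 0 (f 0).
Proof.
  intros Hk HG Hd Hle Hrc t Ht.
  assert (H := linear_comparison f f' k G 0 Hk Hd Hle Hrc t Ht).
  assert (He : 0 < exp (- k * (t - 0)) <= 1)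
    by (split; [apply exp_pos | rewrite <- exp_0; apply exp_le; nra]).
  assert (0 <= G / k) by (apply Rmult_le_pos; [lra | left; apply Rinv_0_lt_compat, Hk]).
  pose proof (Rmax_l 0 (f 0)). pose proof (Rmax_r 0 (f 0)).
  destruct (Rle_or_lt 0 (f 0 - G / k)); nra.
Qed.

Lemma exp_decay_eventually (A k eps : R) : 0 < k -> 0 < eps ->
  Rbar_locally p_infty (fun t => A * exp (- k * t) <= eps).
Proof.
  intros Hk He. exists (Rabs A / (k * eps)). intros t Ht.
  assert (Hpos : 0 <= Rabs A / (k * eps))
    by (apply Rmult_le_pos; [apply Rabs_pos | left; apply Rinv_0_lt_compat; nra]).
  assert (HA : Rabs A <= eps * (k * t)).
  { assert (Rabs A = k * eps * (Rabs A / (k * eps))) by (field; lra).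
    assert (0 < k * eps) by nra. nra. }
  pose proof (exp_ineq1_le (k * t)). pose proof (exp_pos (k * t)).
  pose proof (Rle_abs A).
  replace (- k * t) with (- (k * t)) by ring. rewrite exp_Ropp.
  apply (Rmult_le_reg_r (exp (k * t))); [lra|].
  rewrite Rmult_assoc, Rinv_l by lra. nra.
Qed.

Lemma linear_comparison_eventually (f f' : R -> R) (k eta : R) : 0 < k ->
  (forall t, 0 < t -> is_derive f t (f' t)) ->
  Rbar_locally p_infty (fun t => f' t <= - k * f t + eta) ->
  forall eps, 0 < eps -> Rbar_locally p_infty (fun t => f t <= eta / k + eps).
Proof.
  intros Hk Hd [T HT] eps He.
  set (T1 := Rmax T 1). pose proof (Rmax_l T 1). pose proof (Rmax_r T 1).
  destruct (exp_decay_eventually (f T1 - eta / k) k eps Hk He) as [T2 HT2].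
  exists (T1 + Rmax T2 0). intros t Ht. pose proof (Rmax_l T2 0). pose proof (Rmax_r T2 0).
  assert (Hcmp : f t <= eta / k + (f T1 - eta / k) * exp (- k * (t - T1))).
  { apply (linear_comparison f f'); [exact Hk | | | | lra].
    - intros s Hs. apply Hd. unfold T1 in *; lra.
    - intros s Hs. apply HT. unfold T1 in *; lra.
    - apply (right_continuous_of_derive _ _ (f' T1)), Hd. unfold T1 in *; lra. }
  specialize (HT2 (t - T1) ltac:(lra)). lra.
Qed.

Lemma gronwall_exp_rate (f f' : R -> R) (a k : R) : 0 < k -> 0 <= a ->
  (forall t, 0 <= t -> 0 <= f t) -> (forall t, 0 < t -> is_derive f t (f' t)) ->
  (forall t, 0 < t -> f' t <= a * exp (- k * t) * f t) -> right_continuous f 0 ->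
  forall t, 0 <= t -> f t <= f 0 * exp (a / k).
Proof.
  intros Hk Ha Hnn Hd Hle Hrc t Ht.
  set (phi := fun s => a / k * exp (- k * s)).
  assert (Hphi : forall s, is_derive phi s (- a * exp (- k * s))).
  { intros s. unfold phi. auto_derive; [auto | field; lra]. }
  assert (H : exp (phi t) * f t <= exp (phi 0) * f 0).
  { apply (integrating_factor_le f f' phi _ 0 Hd Hphi); [| exact Hrc | exact Ht].
    intros s Hs. specialize (Hle s Hs). lra. }
  unfold phi in H. rewrite Rmult_0_r, exp_0, Rmult_1_r in H.
  assert (0 <= a / k * exp (- k * t)).
  { apply Rmult_le_pos; [| left; apply exp_pos].
    apply Rmult_le_pos; [lra | left; apply Rinv_0_lt_compat, Hk]. }
  pose proof (exp_ineq1_le (a / k * exp (- k * t))). pose proof (Hnn t Ht). nra.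
Qed.

Section Chemostat.

Variables D S0 k1 k2 y1 y2 y3 y4 : R.
Variables (mu1 : R -> R) (mu2 : R -> R -> R).
Hypotheses (HD : 0 < D) (HS0 : 0 < S0) (Hk1 : 0 <= k1) (Hk2 : 0 <= k2).
Hypotheses (Hy1 : 0 < y1) (Hy2 : 0 <= y2) (Hy3 : 0 <= y3) (Hy4 : 0 <= y4).
Hypothesis mu1_0 : mu1 0 = 0.
Hypothesis mu1_increasing : forall a b, 0 <= a < b -> mu1 a < mu1 b.
Hypothesis mu1_S0_le : mu1 S0 <= D + k1.
Variable L : R.
Hypothesis L_ge0 : 0 <= L.
Hypothesis mu1_lipschitz_S0 : forall x, 0 <= x <= 1 -> mu1 (S0 + x) - mu1 S0 <= L * x.
Hypothesis mu2_ge0 : forall u v, 0 <= u -> 0 <= v -> 0 <= mu2 u v.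
Variable rho : R.
Hypothesis rho_gt0 : 0 < rho.
Hypothesis mu2_small : forall u v, 0 <= u < rho -> 0 <= v < rho -> mu2 u v <= (D + k2) / 2.

Local Notation F := (field D S0 (D + k1) (D + k2) y1 y2 y3 y4 mu1 mu2).
Local Notation E := (mkState S0 0 0 0 0).

Definition near_washout (e : R) (p : state) : Prop :=
  Rabs (St1 p - S0) <= e /\ Xt1 p <= e /\ St2 p <= e /\ St3 p <= e /\ Xt2 p <= e.

Lemma near_washout_of_dist5 (p : state) (e : R) : dist5 p E < e -> near_washout e p.
Proof.
  unfold dist5, near_washout; simpl. rewrite !Rminus_0_r.
  set (a1 := St1 p - S0). set (a2 := Xt1 p). set (a3 := St2 p).
  set (a4 := St3 p). set (a5 := Xt2 p).
  intros H.
  assert (Hc : forall a, a ^ 2 <= a1 ^ 2 + a2 ^ 2 + a3 ^ 2 + a4 ^ 2 + a5 ^ 2 -> Rabs a <= e).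
  { intros a Ha. rewrite <- sqrt_Rsqr_abs. left; eapply Rle_lt_trans; [|exact H].
    apply sqrt_le_1_alt. unfold Rsqr. lra. }
  pose proof (pow2_ge_0 a1). pose proof (pow2_ge_0 a2). pose proof (pow2_ge_0 a3).
  pose proof (pow2_ge_0 a4). pose proof (pow2_ge_0 a5).
  repeat split; [apply Hc; lra | ..]; (eapply Rle_trans; [apply Rle_abs | apply Hc; lra]).
Qed.

Lemma dist5_lt_of_near_washout (p : state) (e eps : R) :
  in_orthant p -> near_washout e p -> 0 < eps -> 3 * e <= eps -> dist5 p E < eps.
Proof.
  unfold in_orthant, near_washout, dist5; simpl.
  intros (H1 & H2 & H3 & H4 & H5) (B1 & B2 & B3 & B4 & B5) He H3e.
  apply Rabs_le_between' in B1. rewrite !Rminus_0_r.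
  rewrite <- (sqrt_pow2 eps) by lra. apply sqrt_lt_1_alt.
  split; [repeat apply Rplus_le_le_0_compat; apply pow2_ge_0 | nra].
Qed.

Lemma mu1_le (a b : R) : 0 <= a <= b -> mu1 a <= mu1 b.
Proof.
  intros Hab. destruct (Req_dec a b) as [->|Hne]; [lra|]. left; apply mu1_increasing; lra.
Qed.

Lemma mu1_ge0 (s : R) : 0 <= s -> 0 <= mu1 s.
Proof. intros Hs. rewrite <- mu1_0. apply mu1_le; lra. Qed.

Lemma net_growth_le_lipschitz (s x : R) :
  0 <= s -> 0 <= x <= 1 -> s <= S0 + x -> mu1 s - (D + k1) <= L * x.
Proof.
  intros Hs Hx Hsx. destruct (Rle_or_lt s S0) as [Hle|Hlt].
  - assert (mu1 s <= mu1 S0) by (apply mu1_le; lra). nra.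
  - assert (H := mu1_lipschitz_S0 (s - S0) ltac:(lra)).
    replace (S0 + (s - S0)) with s in H by ring. nra.
Qed.

Definition growth_deficit (eps : R) : R := D + k1 - mu1 (Rmax 0 (S0 - y1 * eps / 2)).

Lemma growth_deficit_pos (eps : R) : 0 < eps -> 0 < growth_deficit eps.
Proof.
  intros He. unfold growth_deficit.
  assert (Rmax 0 (S0 - y1 * eps / 2) < S0) by (apply Rmax_lub_lt; nra).
  assert (mu1 (Rmax 0 (S0 - y1 * eps / 2)) < mu1 S0)
    by (apply mu1_increasing; split; [apply Rmax_l | lra]).
  lra.
Qed.

(* If [x >= eps], the excess bound forces [s <= S0 - y1 eps / 2], where the net growth
   rate is at most [- growth_deficit eps]; otherwise it is at most [L th <= growth_deficit eps]. *)
Lemma net_growth_le (eps th s x : R) :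
  0 < eps -> 0 <= s -> 0 <= x -> 0 <= th <= 1 -> th <= y1 * eps / 2 ->
  L * th <= growth_deficit eps -> s + y1 * x - S0 <= th ->
  (mu1 s - (D + k1)) * x <= - growth_deficit eps * x + 2 * growth_deficit eps * eps.
Proof.
  intros He Hs Hx Hth Hth1 HLth Hexc. assert (Hk := growth_deficit_pos eps He).
  destruct (Rle_or_lt eps x) as [Hbig|Hsmall].
  - assert (mu1 s <= mu1 (Rmax 0 (S0 - y1 * eps / 2))).
    { apply mu1_le. split; [lra|]. eapply Rle_trans; [|apply Rmax_r]. nra. }
    unfold growth_deficit in *. nra.
  - assert (mu1 s - (D + k1) <= L * th) by (apply net_growth_le_lipschitz; nra). nra.
Qed.

Definition uptake_gain : R := mu1 (S0 + 1) * exp (L / D) / D.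

Lemma uptake_gain_ge0 : 0 <= uptake_gain.
Proof.
  apply Rmult_le_pos; [apply Rmult_le_pos; [apply mu1_ge0; lra | left; apply exp_pos] |
    left; apply Rinv_0_lt_compat, HD].
Qed.

(* [1 + y1] bounds the excess of S1, [exp (L / D)] is the Gronwall factor of X1, and
   [y * uptake_gain] bounds the substrates fed by the uptake [mu1 S1 X1 <= D uptake_gain dl]. *)
Definition stability_gain : R := 1 + y1 + exp (L / D) + (y1 + y2 + y4) * uptake_gain.

Section Trajectory.

Variable z : R -> state.
Hypothesis z_solution : is_solution F z.

Let s1 (t : R) : R := St1 (z t).
Let x1 (t : R) : R := Xt1 (z t).
Let s2 (t : R) : R := St2 (z t).
Let s3 (t : R) : R := St3 (z t).
Let x2 (t : R) : R := Xt2 (z t).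

Lemma state_nonneg (t : R) :
  0 <= t -> 0 <= s1 t /\ 0 <= x1 t /\ 0 <= s2 t /\ 0 <= s3 t /\ 0 <= x2 t.
Proof. intros Ht. destruct z_solution as [Hor _]. exact (Hor t Ht). Qed.

Lemma s1_right_continuous : right_continuous s1 0.
Proof. now destruct z_solution as (_ & H & _). Qed.

Lemma x1_right_continuous : right_continuous x1 0.
Proof. now destruct z_solution as (_ & _ & H & _). Qed.

Lemma s2_right_continuous : right_continuous s2 0.
Proof. now destruct z_solution as (_ & _ & _ & H & _). Qed.

Lemma s3_right_continuous : right_continuous s3 0.
Proof. now destruct z_solution as (_ & _ & _ & _ & H & _). Qed.

Lemma x2_right_continuous : right_continuous x2 0.
Proof. now destruct z_solution as (_ & _ & _ & _ & _ & H & _). Qed.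

Lemma s1_derive (t : R) : 0 < t ->
  is_derive s1 t ((S0 - s1 t) * D - y1 * mu1 (s1 t) * x1 t).
Proof. intros Ht. destruct z_solution as (_ & _ & _ & _ & _ & _ & H). apply (H t Ht). Qed.

Lemma x1_derive (t : R) : 0 < t ->
  is_derive x1 t (- (D + k1) * x1 t + mu1 (s1 t) * x1 t).
Proof. intros Ht. destruct z_solution as (_ & _ & _ & _ & _ & _ & H). apply (H t Ht). Qed.

Lemma s2_derive (t : R) : 0 < t ->
  is_derive s2 t (- D * s2 t + y2 * mu1 (s1 t) * x1 t - y3 * mu2 (s2 t) (s3 t) * x2 t).
Proof. intros Ht. destruct z_solution as (_ & _ & _ & _ & _ & _ & H). apply (H t Ht). Qed.

Lemma s3_derive (t : R) : 0 < t ->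
  is_derive s3 t (- D * s3 t + y4 * mu1 (s1 t) * x1 t).
Proof. intros Ht. destruct z_solution as (_ & _ & _ & _ & _ & _ & H). apply (H t Ht). Qed.

Lemma x2_derive (t : R) : 0 < t ->
  is_derive x2 t (- (D + k2) * x2 t + mu2 (s2 t) (s3 t) * x2 t).
Proof. intros Ht. destruct z_solution as (_ & _ & _ & _ & _ & _ & H). apply (H t Ht). Qed.

Lemma s1_deficit_derive (t : R) : 0 < t ->
  is_derive (fun s => S0 - s1 s) t (- D * (S0 - s1 t) + y1 * mu1 (s1 t) * x1 t).
Proof.
  intros Ht. eapply (is_derive_affine s1 x1 _ (-1) 0 S0);
    [intros; ring | | apply s1_derive, Ht | apply x1_derive, Ht]; ring.
Qed.

Lemma s2_derive_le (t : R) : 0 < t ->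
  - D * s2 t + y2 * mu1 (s1 t) * x1 t - y3 * mu2 (s2 t) (s3 t) * x2 t
  <= - D * s2 t + y2 * mu1 (s1 t) * x1 t.
Proof.
  intros Ht. destruct (state_nonneg t) as (_ & _ & H2 & H3 & H5); [lra|].
  assert (0 <= mu2 (s2 t) (s3 t)) by auto.
  assert (0 <= y3 * mu2 (s2 t) (s3 t) * x2 t) by (repeat apply Rmult_le_pos; lra). lra.
Qed.

Let c : R := Rmax 0 (s1 0 + y1 * x1 0 - S0).

Lemma excess_le (t : R) : 0 <= t -> s1 t + y1 * x1 t - S0 <= c * exp (- D * t).
Proof.
  intros Ht.
  assert (H : s1 t + y1 * x1 t - S0
              <= 0 / D + (s1 0 + y1 * x1 0 - S0 - 0 / D) * exp (- D * (t - 0))).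
  { apply (linear_comparison (fun s => s1 s + y1 * x1 s - S0)
      (fun s => - D * (s1 s + y1 * x1 s - S0) - y1 * k1 * x1 s)); [exact HD | | | | exact Ht].
    - intros s Hs. eapply (is_derive_affine s1 x1 _ 1 y1 (- S0));
        [intros; ring | | apply s1_derive, Hs | apply x1_derive, Hs]; ring.
    - intros s Hs. destruct (state_nonneg s) as (_ & Hx & _); [lra|].
      assert (0 <= y1 * k1 * x1 s) by (repeat apply Rmult_le_pos; lra). lra.
    - apply (right_continuous_affine s1 x1 _ 1 y1 (- S0));
        [intros; ring | apply s1_right_continuous | apply x1_right_continuous]. }
  unfold Rdiv in H. rewrite Rmult_0_l, Rplus_0_l, !Rminus_0_r in H.
  pose proof (exp_pos (- D * t)). pose proof (Rmax_r 0 (s1 0 + y1 * x1 0 - S0)).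
  unfold c. nra.
Qed.

Lemma s1_le (t : R) : 0 <= t -> s1 t <= S0 + c * exp (- D * t).
Proof.
  intros Ht. pose proof (excess_le t Ht). destruct (state_nonneg t Ht) as (_ & Hx & _). nra.
Qed.

Lemma mu1_s1_le (t : R) : 0 <= t -> mu1 (s1 t) <= mu1 (S0 + c).
Proof.
  intros Ht. apply mu1_le. split; [apply (state_nonneg t Ht)|].
  assert (exp (- D * t) <= 1) by (rewrite <- exp_0; apply exp_le; nra).
  pose proof (s1_le t Ht). pose proof (Rmax_l 0 (s1 0 + y1 * x1 0 - S0)). unfold c in *. nra.
Qed.

Lemma x1_le_gronwall : c <= 1 -> forall t, 0 <= t -> x1 t <= x1 0 * exp (L * c / D).
Proof.
  intros Hc1. assert (Hc0 : 0 <= c) by apply Rmax_l.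
  apply (gronwall_exp_rate x1 (fun s => - (D + k1) * x1 s + mu1 (s1 s) * x1 s) (L * c) D HD);
    [nra | apply state_nonneg | apply x1_derive | | apply x1_right_continuous].
  intros s Hs. destruct (state_nonneg s) as (Hs1 & Hx & _); [lra|].
  assert (He : 0 < exp (- D * s) <= 1)
    by (split; [apply exp_pos | rewrite <- exp_0; apply exp_le; nra]).
  assert (mu1 (s1 s) - (D + k1) <= L * (c * exp (- D * s)))
    by (apply net_growth_le_lipschitz; [lra | nra | apply s1_le; lra]).
  nra.
Qed.

Lemma x1_vanishes (eps : R) : 0 < eps -> Rbar_locally p_infty (fun t => x1 t <= eps).
Proof.
  intros He. set (kap := growth_deficit (eps / 3)).
  assert (Hkap : 0 < kap) by (apply growth_deficit_pos; lra).
  set (th := Rmin 1 (Rmin (y1 * (eps / 3) / 2) (kap / (L + 1)))).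
  assert (Hth : 0 < th) by (repeat apply Rmin_pos; try apply Rdiv_lt_0_compat; nra).
  assert (Hth1 : th <= 1) by apply Rmin_l.
  assert (Hth2 : th <= y1 * (eps / 3) / 2) by (eapply Rle_trans; [apply Rmin_r | apply Rmin_l]).
  assert (HLth : L * th <= kap).
  { assert (th <= kap / (L + 1)) by (eapply Rle_trans; [apply Rmin_r | apply Rmin_r]).
    assert ((L + 1) * th <= kap).
    { replace kap with ((L + 1) * (kap / (L + 1))) by (field; lra).
      apply Rmult_le_compat_l; lra. }
    nra. }
  assert (Hrate : Rbar_locally p_infty
    (fun t => - (D + k1) * x1 t + mu1 (s1 t) * x1 t <= - kap * x1 t + 2 * kap * (eps / 3))).
  { destruct (exp_decay_eventually c D th HD Hth) as [T HT].
    exists (Rmax T 0). intros t Ht. pose proof (Rmax_l T 0). pose proof (Rmax_r T 0).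
    destruct (state_nonneg t) as (Hs & Hx & _); [lra|].
    replace (- (D + k1) * x1 t + mu1 (s1 t) * x1 t) with ((mu1 (s1 t) - (D + k1)) * x1 t) by ring.
    apply (net_growth_le (eps / 3) th); try (fold kap; lra).
    eapply Rle_trans; [apply excess_le; lra | apply HT; lra]. }
  generalize (linear_comparison_eventually x1 _ kap _ Hkap x1_derive Hrate (eps / 3) ltac:(lra)).
  apply filter_imp. intros t Ht.
  replace (2 * kap * (eps / 3) / kap) with (2 * (eps / 3)) in Ht by (field; lra). lra.
Qed.

Lemma driven_vanishes (f f' : R -> R) (y : R) : 0 <= y ->
  (forall t, 0 < t -> is_derive f t (f' t)) ->
  (forall t, 0 < t -> f' t <= - D * f t + y * mu1 (s1 t) * x1 t) ->
  forall eps, 0 < eps -> Rbar_locally p_infty (fun t => f t <= eps).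
Proof.
  intros Hy Hd Hle eps He.
  set (M := mu1 (S0 + c)).
  assert (HM : 0 <= M)
    by (apply mu1_ge0; pose proof (Rmax_l 0 (s1 0 + y1 * x1 0 - S0)); unfold c; lra).
  set (e1 := D * eps / 2 / ((y + 1) * (M + 1))).
  assert (He1 : 0 < e1) by (apply Rdiv_lt_0_compat; nra).
  assert (Hforce : Rbar_locally p_infty (fun t => f' t <= - D * f t + D * eps / 2)).
  { apply (filter_imp (fun t => 0 < t /\ x1 t <= e1));
      [| apply filter_and; [exists 0; auto | apply x1_vanishes, He1]].
    intros t [Ht Hx]. specialize (Hle t Ht).
    destruct (state_nonneg t) as (Hs & Hx0 & _); [lra|].
    assert (Hmu : 0 <= mu1 (s1 t) <= M) by (split; [apply mu1_ge0 | apply mu1_s1_le]; lra).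
    assert (Hprod : mu1 (s1 t) * x1 t <= (M + 1) * e1) by (apply Rmult_le_compat; lra).
    assert (y * (mu1 (s1 t) * x1 t) <= (y + 1) * ((M + 1) * e1))
      by (apply Rmult_le_compat; try lra; apply Rmult_le_pos; lra).
    assert ((y + 1) * ((M + 1) * e1) = D * eps / 2) by (unfold e1; field; lra).
    lra. }
  generalize (linear_comparison_eventually f f' D _ HD Hd Hforce (eps / 2) ltac:(lra)).
  apply filter_imp. intros t Ht.
  replace (D * eps / 2 / D) with (eps / 2) in Ht by (field; lra). lra.
Qed.

Lemma s1_excess_vanishes (eps : R) : 0 < eps -> Rbar_locally p_infty (fun t => s1 t - S0 <= eps).
Proof.
  intros He. destruct (exp_decay_eventually c D eps HD He) as [T HT].
  exists (Rmax T 0). intros t Ht. pose proof (Rmax_l T 0). pose proof (Rmax_r T 0).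
  pose proof (s1_le t ltac:(lra)). pose proof (HT t ltac:(lra)). lra.
Qed.

Lemma s1_deficit_vanishes (eps : R) : 0 < eps -> Rbar_locally p_infty (fun t => S0 - s1 t <= eps).
Proof.
  apply (driven_vanishes (fun s => S0 - s1 s)
    (fun s => - D * (S0 - s1 s) + y1 * mu1 (s1 s) * x1 s) y1);
    [lra | apply s1_deficit_derive | intros; lra].
Qed.

Lemma s2_vanishes (eps : R) : 0 < eps -> Rbar_locally p_infty (fun t => s2 t <= eps).
Proof. apply (driven_vanishes _ _ y2 Hy2 s2_derive s2_derive_le). Qed.

Lemma s3_vanishes (eps : R) : 0 < eps -> Rbar_locally p_infty (fun t => s3 t <= eps).
Proof. apply (driven_vanishes _ _ y4 Hy4 s3_derive); intros; lra. Qed.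

Lemma x2_vanishes (eps : R) : 0 < eps -> Rbar_locally p_infty (fun t => x2 t <= eps).
Proof.
  intros He.
  assert (Hrate : Rbar_locally p_infty
    (fun t => - (D + k2) * x2 t + mu2 (s2 t) (s3 t) * x2 t <= - ((D + k2) / 2) * x2 t + 0)).
  { apply (filter_imp (fun t => 0 < t /\ s2 t <= rho / 2 /\ s3 t <= rho / 2));
      [| repeat apply filter_and; [exists 0; auto | apply s2_vanishes | apply s3_vanishes]; lra].
    intros t (Ht & H2 & H3). destruct (state_nonneg t) as (_ & _ & H2' & H3' & Hx); [lra|].
    assert (mu2 (s2 t) (s3 t) <= (D + k2) / 2) by (apply mu2_small; lra). nra. }
  generalize (linear_comparison_eventually x2 _ ((D + k2) / 2) 0 ltac:(lra) x2_derive Hrate eps He).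
  apply filter_imp. intros t Ht. unfold Rdiv at 1 in Ht. rewrite Rmult_0_l in Ht. lra.
Qed.

Lemma converges_to_washout (eps : R) : 0 < eps ->
  Rbar_locally p_infty (fun t => near_washout eps (z t)).
Proof.
  intros He.
  apply (filter_imp (fun t => (s1 t - S0 <= eps /\ S0 - s1 t <= eps) /\
                              x1 t <= eps /\ s2 t <= eps /\ s3 t <= eps /\ x2 t <= eps)).
  - intros t ((H1 & H1') & H). split; [|exact H].
    change (Rabs (s1 t - S0) <= eps). apply Rabs_le. lra.
  - repeat apply filter_and; auto using s1_excess_vanishes, s1_deficit_vanishes,
      x1_vanishes, s2_vanishes, s3_vanishes, x2_vanishes.
Qed.

Section Small_initial_deviation.

Variable dl : R.
Hypothesis dl_small : (1 + y1) * dl <= 1.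
Hypothesis z0_near : near_washout dl (z 0).

Lemma initial_deviation :
  Rabs (s1 0 - S0) <= dl /\ x1 0 <= dl /\ s2 0 <= dl /\ s3 0 <= dl /\ x2 0 <= dl.
Proof. exact z0_near. Qed.

Lemma dl_ge0 : 0 <= dl.
Proof. destruct initial_deviation as (H & _). pose proof (Rabs_pos (s1 0 - S0)). lra. Qed.

Lemma excess0_le : c <= (1 + y1) * dl.
Proof.
  destruct initial_deviation as (H1 & H2 & _). apply Rabs_le_between' in H1.
  apply Rmax_lub; nra.
Qed.

Lemma s1_excess_le_small (t : R) : 0 <= t -> s1 t - S0 <= (1 + y1) * dl.
Proof.
  intros Ht. assert (exp (- D * t) <= 1) by (rewrite <- exp_0; apply exp_le; nra).
  pose proof (exp_pos (- D * t)). pose proof (s1_le t Ht). pose proof excess0_le.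
  pose proof (Rmax_l 0 (s1 0 + y1 * x1 0 - S0)). unfold c in *. nra.
Qed.

Lemma x1_le_small (t : R) : 0 <= t -> x1 t <= exp (L / D) * dl.
Proof.
  intros Ht. assert (Hc := excess0_le). assert (Hc0 : 0 <= c) by apply Rmax_l.
  destruct initial_deviation as (_ & Hx0 & _). destruct (state_nonneg 0) as (_ & Hx0' & _); [lra|].
  assert (exp (L * c / D) <= exp (L / D)).
  { apply exp_le. unfold Rdiv. apply Rmult_le_compat_r; [left; apply Rinv_0_lt_compat, HD | nra]. }
  pose proof (exp_pos (L * c / D)).
  pose proof (x1_le_gronwall ltac:(lra) t Ht). nra.
Qed.

Lemma uptake_le_small (t : R) : 0 <= t -> mu1 (s1 t) * x1 t <= D * uptake_gain * dl.
Proof.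
  intros Ht. destruct (state_nonneg t Ht) as (Hs & Hx & _).
  replace (D * uptake_gain * dl) with (mu1 (S0 + 1) * (exp (L / D) * dl))
    by (unfold uptake_gain; field; lra).
  apply Rmult_le_compat; [apply mu1_ge0, Hs | exact Hx | | apply x1_le_small, Ht].
  apply mu1_le. split; [exact Hs|]. pose proof (s1_excess_le_small t Ht). lra.
Qed.

Lemma driven_le_small (f f' : R -> R) (y : R) : 0 <= y ->
  (forall t, 0 < t -> is_derive f t (f' t)) ->
  (forall t, 0 < t -> f' t <= - D * f t + y * mu1 (s1 t) * x1 t) ->
  right_continuous f 0 -> f 0 <= dl ->
  forall t, 0 <= t -> f t <= y * uptake_gain * dl + dl.
Proof.
  intros Hy Hd Hle Hrc Hf0 t Ht. pose proof dl_ge0. pose proof uptake_gain_ge0.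
  assert (HG : 0 <= y * (D * uptake_gain * dl))
    by (apply Rmult_le_pos; [lra|]; apply Rmult_le_pos; [apply Rmult_le_pos|]; lra).
  assert (Hcmp : f t <= y * (D * uptake_gain * dl) / D + Rmax 0 (f 0)).
  { apply (linear_comparison_bound f f' D _ HD HG Hd); [| exact Hrc | exact Ht].
    intros s Hs. specialize (Hle s Hs). pose proof (uptake_le_small s ltac:(lra)).
    assert (y * (mu1 (s1 s) * x1 s) <= y * (D * uptake_gain * dl))
      by (apply Rmult_le_compat_l; lra).
    lra. }
  replace (y * (D * uptake_gain * dl) / D) with (y * uptake_gain * dl) in Hcmp by (field; lra).
  pose proof (Rmax_lub 0 (f 0) dl dl_ge0 Hf0). lra.
Qed.

Lemma s1_deficit_le_small (t : R) : 0 <= t -> S0 - s1 t <= y1 * uptake_gain * dl + dl.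
Proof.
  apply (driven_le_small (fun s => S0 - s1 s)
    (fun s => - D * (S0 - s1 s) + y1 * mu1 (s1 s) * x1 s) y1); try (intros; lra).
  - apply s1_deficit_derive.
  - apply (right_continuous_affine s1 s1 _ (-1) 0 S0);
      [intros; ring | apply s1_right_continuous ..].
  - destruct initial_deviation as (H & _). apply Rabs_le_between' in H. lra.
Qed.

Lemma s2_le_small (t : R) : 0 <= t -> s2 t <= y2 * uptake_gain * dl + dl.
Proof.
  apply (driven_le_small s2 _ y2 Hy2 s2_derive s2_derive_le s2_right_continuous).
  apply initial_deviation.
Qed.

Lemma s3_le_small (t : R) : 0 <= t -> s3 t <= y4 * uptake_gain * dl + dl.
Proof.
  apply (driven_le_small s3 _ y4 Hy4 s3_derive); [intros; lra | apply s3_right_continuous |].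
  apply initial_deviation.
Qed.

Hypothesis gain_small : stability_gain * dl < rho.

Lemma stability_gain_mul_ge :
  y2 * uptake_gain * dl + dl <= stability_gain * dl /\
  y4 * uptake_gain * dl + dl <= stability_gain * dl /\
  y1 * uptake_gain * dl + dl <= stability_gain * dl /\
  (1 + y1) * dl <= stability_gain * dl /\ exp (L / D) * dl <= stability_gain * dl.
Proof.
  pose proof dl_ge0. pose proof uptake_gain_ge0. pose proof (exp_pos (L / D)).
  assert (Hpos : forall a b, 0 <= a -> 0 <= b -> 0 <= a * b) by (intros; apply Rmult_le_pos; lra).
  pose proof (Hpos _ _ (Hpos _ _ (Rlt_le _ _ Hy1) uptake_gain_ge0) dl_ge0).
  pose proof (Hpos _ _ (Hpos _ _ Hy2 uptake_gain_ge0) dl_ge0).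
  pose proof (Hpos _ _ (Hpos _ _ Hy4 uptake_gain_ge0) dl_ge0).
  pose proof (Hpos _ _ (Rlt_le _ _ Hy1) dl_ge0). pose proof (Hpos _ _ (Rlt_le _ _ H1) dl_ge0).
  unfold stability_gain. repeat split; nra.
Qed.

Lemma x2_le_small (t : R) : 0 <= t -> x2 t <= dl.
Proof.
  intros Ht. destruct initial_deviation as (_ & _ & _ & _ & Hx0).
  enough (x2 t <= x2 0) by lra.
  apply (nonincreasing_of_derive_nonpos x2 _ 0 x2_derive); [| apply x2_right_continuous | exact Ht].
  intros s Hs. destruct (state_nonneg s) as (_ & _ & H2 & H3 & H5); [lra|].
  pose proof stability_gain_mul_ge. pose proof (s2_le_small s ltac:(lra)).
  pose proof (s3_le_small s ltac:(lra)).
  assert (mu2 (s2 s) (s3 s) <= (D + k2) / 2) by (apply mu2_small; lra).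
  nra.
Qed.

Lemma deviation_bounded (t : R) : 0 <= t -> near_washout (stability_gain * dl) (z t).
Proof.
  intros Ht. change (Rabs (s1 t - S0) <= stability_gain * dl /\ x1 t <= stability_gain * dl /\
    s2 t <= stability_gain * dl /\ s3 t <= stability_gain * dl /\ x2 t <= stability_gain * dl).
  pose proof stability_gain_mul_ge.
  assert (0 <= y1 * dl) by (apply Rmult_le_pos; [lra | apply dl_ge0]).
  pose proof (s1_excess_le_small t Ht). pose proof (s1_deficit_le_small t Ht).
  pose proof (x1_le_small t Ht). pose proof (s2_le_small t Ht). pose proof (s3_le_small t Ht).
  pose proof (x2_le_small t Ht).
  repeat split; [apply Rabs_le | ..]; lra.
Qed.

End Small_initial_deviation.

End Trajectory.

Lemma stability_gain_ge : 1 + y1 <= stability_gain.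
Proof.
  unfold stability_gain. pose proof (exp_pos (L / D)). pose proof uptake_gain_ge0.
  assert (0 <= (y1 + y2 + y4) * uptake_gain) by (apply Rmult_le_pos; lra).
  lra.
Qed.

Lemma washout_is_equilibrium : F E = mkState 0 0 0 0 0.
Proof. unfold field; simpl. f_equal; ring. Qed.

Lemma washout_stable (eps : R) : 0 < eps -> exists del, 0 < del /\
  forall z, is_solution F z -> dist5 (z 0) E < del -> forall t, 0 <= t -> dist5 (z t) E < eps.
Proof.
  intros He. assert (HK := stability_gain_ge).
  set (m := Rmin 1 (Rmin rho (eps / 3)) / 2).
  assert (Hm : 0 < m /\ m <= 1 / 2 /\ m <= rho / 2 /\ m <= eps / 6).
  { pose proof (Rmin_l 1 (Rmin rho (eps / 3))). pose proof (Rmin_r 1 (Rmin rho (eps / 3))).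
    pose proof (Rmin_l rho (eps / 3)). pose proof (Rmin_r rho (eps / 3)).
    assert (0 < Rmin 1 (Rmin rho (eps / 3))) by (repeat apply Rmin_pos; lra).
    unfold m; lra. }
  exists (m / stability_gain). split; [apply Rdiv_lt_0_compat; lra|].
  intros z Hz Hz0 t Ht.
  assert (Hgm : stability_gain * (m / stability_gain) = m) by (field; lra).
  apply (dist5_lt_of_near_washout _ (stability_gain * (m / stability_gain)));
    [apply Hz, Ht | | lra | lra].
  apply (deviation_bounded z Hz); [| apply near_washout_of_dist5, Hz0 | lra | exact Ht].
  assert (0 <= m / stability_gain) by (apply Rlt_le, Rdiv_lt_0_compat; lra).
  assert ((1 + y1) * (m / stability_gain) <= stability_gain * (m / stability_gain))
    by (apply Rmult_le_compat_r; lra).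
  lra.
Qed.

Lemma washout_attractive (z : R -> state) :
  is_solution F z -> is_lim (fun t => dist5 (z t) E) p_infty 0.
Proof.
  intros Hz. apply is_lim_spec. intros [eps He].
  change (Rbar_locally p_infty (fun t => Rabs (dist5 (z t) E - 0) < eps)).
  apply (filter_imp (fun t => 0 < t /\ near_washout (eps / 3) (z t)));
    [| apply filter_and; [exists 0; auto | apply (converges_to_washout z Hz); lra]].
  intros t [Ht Hnear]. rewrite Rminus_0_r, Rabs_right by (apply Rle_ge, sqrt_pos).
  apply (dist5_lt_of_near_washout _ (eps / 3)); [apply Hz; lra | exact Hnear | lra | lra].
Qed.

Lemma washout_globally_asymptotically_stable : globally_asymptotically_stable F E.
Proof.
  split; [repeat split; simpl; lra | split; [exact washout_is_equilibrium | split]].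
  - exact washout_stable.
  - exact washout_attractive.
Qed.

End Chemostat.

Lemma strictly_increasing_of_derive_pos (f f' : R -> R) :
  (forall x, 0 < x -> is_derive f x (f' x)) -> (forall x, 0 < x -> 0 < f' x) ->
  (forall x, 0 < x -> f 0 < f x) -> forall a b, 0 <= a < b -> f a < f b.
Proof.
  intros Hd Hpos H0 a b Hab. destruct (Req_dec a 0) as [->|Hne]; [apply H0; lra|].
  destruct (MVT_cor2 f f' a b) as [c [Hc Hcab]]; [lra | |].
  - intros c Hc. apply is_derive_Reals, Hd. lra.
  - assert (0 < f' c) by (apply Hpos; lra). nra.
Qed.

Lemma continuity_pt_of_cont_on_nonneg (f : R -> R) (x : R) :
  cont_on_nonneg f -> 0 < x -> continuity_pt f x.
Proof.
  intros Hf Hx eps He. destruct (Hf x ltac:(lra) eps He) as [del [Hdel Hclose]].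
  exists (Rmin del x). split; [apply Rmin_pos; lra|].
  intros y [_ Hy]. simpl in *. unfold R_dist in *.
  pose proof (Rmin_l del x). pose proof (Rmin_r del x). apply Rabs_def2 in Hy.
  apply Hclose; [lra | apply Rabs_def1; lra].
Qed.

Lemma le_of_break_even (f f' : R -> R) (D1 S : R) (l : Rbar) :
  (forall x, 0 < x -> is_derive f x (f' x)) -> cont_on_nonneg f -> f 0 = 0 ->
  (forall a b, 0 <= a < b -> f a < f b) -> 0 < D1 -> 0 < S ->
  is_break_even f D1 l -> Rbar_le S l -> f S <= D1.
Proof.
  intros Hd Hc H0 Hincr HD1 HS [[x (Hx & -> & Hfx)] | [-> Hnone]] Hle.
  - simpl in Hle. rewrite <- Hfx. destruct Hle as [Hlt | ->]; [left; apply Hincr|]; lra.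
  - apply Rnot_lt_le. intros Hgt. apply Hnone.
    destruct (Hc 0 ltac:(lra) D1 HD1) as [del [Hdel Hclose]].
    set (a := Rmin (del / 2) (S / 2)).
    assert (Ha : 0 < a <= S / 2 /\ a < del)
      by (pose proof (Rmin_l (del / 2) (S / 2)); pose proof (Rmin_r (del / 2) (S / 2));
          assert (0 < a) by (apply Rmin_pos; lra); unfold a in *; lra).
    assert (Hfa : f a < D1).
    { assert (H := Hclose a ltac:(lra) ltac:(rewrite Rminus_0_r, Rabs_right; lra)).
      rewrite H0, Rminus_0_r in H. apply Rabs_def2 in H. lra. }
    destruct (Ranalysis5.IVT_interv (fun x => f x - D1) a S) as [x [Hx Hfx]]; try lra.
    + intros y Hy.
      apply continuity_pt_minus; [| apply continuity_pt_const; intros ? ?; reflexivity].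
      apply derivable_continuous_pt. exists (f' y). apply is_derive_Reals, Hd. lra.
    + exists x. split; lra.
Qed.

Lemma upper_lipschitz_of_derive (f f' : R -> R) (S : R) :
  (forall x, 0 < x -> is_derive f x (f' x)) -> cont_on_nonneg f' -> 0 < S ->
  exists L, 0 <= L /\ forall x, 0 <= x <= 1 -> f (S + x) - f S <= L * x.
Proof.
  intros Hd Hc HS.
  destruct (continuity_ab_maj f' S (S + 1)) as [xm [Hmax _]]; [lra | |].
  { intros c Hcx. apply continuity_pt_of_cont_on_nonneg; [exact Hc | lra]. }
  exists (Rmax 0 (f' xm)). split; [apply Rmax_l|]. intros x Hx.
  destruct (Req_dec x 0) as [->|Hne]; [rewrite Rplus_0_r; lra|].
  destruct (MVT_cor2 f f' S (S + x)) as [c [Hfc Hcx]]; [lra | |].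
  - intros c Hcx. apply is_derive_Reals, Hd. lra.
  - rewrite Hfc. replace (S + x - S) with x by ring.
    assert (f' c <= f' xm) by (apply Hmax; lra). pose proof (Rmax_r 0 (f' xm)). nra.
Qed.

Lemma le_near_origin (g : R -> R -> R) (e : R) : cont_on_quadrant g -> g 0 0 = 0 -> 0 < e ->
  exists rho, 0 < rho /\ forall u v, 0 <= u < rho -> 0 <= v < rho -> g u v <= e.
Proof.
  intros Hg H0 He. destruct (Hg 0 0 ltac:(lra) ltac:(lra) e He) as [rho [Hrho Hclose]].
  exists rho. split; [exact Hrho|]. intros u v Hu Hv.
  assert (H := Hclose u v ltac:(lra) ltac:(lra)
    ltac:(rewrite Rminus_0_r, Rabs_right; lra) ltac:(rewrite Rminus_0_r, Rabs_right; lra)).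
  rewrite H0, Rminus_0_r in H. apply Rabs_def2 in H. lra.
Qed.

Theorem proposition2p2
  (D S0 k1 k2 y1 y2 y3 y4 : R) (mu1 : R -> R) (mu2 : R -> R -> R)
  (mu1' : R -> R) (d2mu2 d3mu2 : R -> R -> R) (Gamma : R -> R) (lambda1 : Rbar)
  (HD : 0 < D) (HS0 : 0 < S0) (Hk1 : 0 <= k1) (Hk2 : 0 <= k2)
  (Hy1 : 0 < y1) (Hy2 : 0 < y2) (Hy3 : 0 < y3) (Hy4 : 0 < y4)
  (H1 : C1_nonneg_with mu1 mu1' /\ forall s, 0 < s -> 0 < mu1' s)
  (H2 : mu1 0 = 0 /\ forall s, 0 < s -> 0 < mu1 s)
  (H3 : C1_quadrant_with mu2 d2mu2 d3mu2 /\
        forall s2 s3, 0 < s2 -> 0 < s3 -> 0 < mu2 s2 s3)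
  (H4 : forall s2, 0 <= s2 -> is_lim (fun s3 => mu2 s2 s3) p_infty 0)
  (H5 : forall s3, 0 <= s3 -> is_lim (fun s2 => mu2 s2 s3) p_infty 0)
  (H6 : (forall s3, 0 <= s3 -> mu2 0 s3 = 0) /\ (forall s2, 0 < s2 -> 0 <= mu2 s2 0))
  (H7 : continuous_on (fun x => 0 <= x) Gamma /\
        forall s2 s3, 0 <= s2 -> 0 <= s3 ->
          (s2 < Gamma s3 -> 0 < d2mu2 s2 s3) /\ (Gamma s3 < s2 -> d2mu2 s2 s3 < 0))
  (Hlambda1 : is_break_even mu1 (D + k1) lambda1)
  (Hge : Rbar_le (Finite S0) lambda1) :
  globally_asymptotically_stable
    (field D S0 (D + k1) (D + k2) y1 y2 y3 y4 mu1 mu2)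
    (mkState S0 0 0 0 0).
Proof.
  (* H4, H5 and H7 describe mu2 away from the origin; the washout analysis does not need them. *)
  destruct H1 as [[Hmu1_cont [Hmu1'_cont Hmu1_derive]] Hmu1'_pos]. destruct H2 as [Hmu1_0 Hmu1_pos].
  destruct H3 as [[Hmu2_cont _] Hmu2_pos]. destruct H6 as [Hmu2_0S3 Hmu2_S20].
  assert (Hincr := strictly_increasing_of_derive_pos mu1 mu1' Hmu1_derive Hmu1'_pos
    ltac:(intros; rewrite Hmu1_0; auto)).
  assert (HS0_le := le_of_break_even mu1 mu1' (D + k1) S0 lambda1 Hmu1_derive Hmu1_cont Hmu1_0
    Hincr ltac:(lra) HS0 Hlambda1 Hge).
  destruct (upper_lipschitz_of_derive mu1 mu1' S0 Hmu1_derive Hmu1'_cont HS0) as [L [HL HLip]].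
  assert (Hmu2_ge0 : forall u v, 0 <= u -> 0 <= v -> 0 <= mu2 u v).
  { intros u v Hu Hv. destruct (Req_dec u 0) as [->|Hu0]; [rewrite Hmu2_0S3; lra|].
    destruct (Req_dec v 0) as [->|Hv0]; [apply Hmu2_S20; lra | left; apply Hmu2_pos; lra]. }
  destruct (le_near_origin mu2 ((D + k2) / 2) Hmu2_cont ltac:(apply Hmu2_0S3; lra) ltac:(lra))
    as [rho [Hrho Hsmall]].
  exact (washout_globally_asymptotically_stable D S0 k1 k2 y1 y2 y3 y4 mu1 mu2 HD HS0 Hk1 Hk2
    Hy1 (Rlt_le _ _ Hy2) (Rlt_le _ _ Hy3) (Rlt_le _ _ Hy4) Hmu1_0 Hincr HS0_le
    L HL HLip Hmu2_ge0 rho Hrho Hsmall).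
Qed.
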